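(* Let $d\ge 1$ be an integer and consider the $d$-dimensional Parallel Random Apollonian Network (P-RAN) process described in the context. For an integer $m\ge 0$ let $Nc_t(m)$ be the number of $(d+1)$-cliques in the list $C_t$ having parallel degree $m$ after $t$ steps, and let $|C_t| = d+2+t(d+1)$ be the total number of cliques in $C_t$. Then for every $m\ge 0$, the fraction $\mathbb{E}[Nc_t(m)]/|C_t|$ converges as $t\to\infty$ to $$Pc(m)=\frac{d+1}{(d+2)^{m+1}},$$ i.e. for large $t$ the parallel degree distribution of the P-RAN asymptotically follows this geometric distribution.
   Context: P-RAN process in dimension $d$: at step $t=0$ the graph is a complete graph on $d+2$ vertices, and the list $C_0$ consists of its $d+2$ $(d+1)$-cliques (vertex subsets of size $d+1$). At each step $t\to t+1$, a clique $c$ is chosen uniformly at random from the current list $C_t$; a new vertex $v$ is added to the graph and joined by edges to all $d+1$ vertices of $c$; the clique $c$ stays in the list and the $d+1$ new $(d+1)$-cliques of the form $\{v\}\cup (c\setminus\{u\})$, $u\in c$, are appended to the list. Thus $|C_t|=d+2+t(d+1)$ and the graph has $d+2+t$ vertices. The parallel degree of a clique $c$ in the list is the number of vertices that have been inserted into $c$ (i.e. the number of steps at which $c$ was the chosen clique); newly created cliques have parallel degree $0$. *)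

From HB Require Import structures.
From mathcomp Require Import all_boot all_order all_algebra.
From mathcomp Require Import all_classical all_reals all_analysis.
Set Implicit Arguments. Unset Strict Implicit. Unset Printing Implicit Defensive.
Import Order.TTheory GRing.Theory Num.Theory.
Local Open Scope ring_scope.

(* A state of the P-RAN process:
   - pr_nv   : number of vertices so far (vertices are 0 .. pr_nv - 1);
   - pr_edges: the edge list of the graph (unordered pairs, stored as pairs);
   - pr_list : the list C_t of (d+1)-cliques, each given as the sequence of its
               vertices, together with its parallel degree. *)
Record pran_state := PRanState {
  pr_nv : nat;
  pr_edges : seq (nat * nat);
  pr_list : seq (seq nat * nat) }.

Definition pran_init (d : nat) : pran_state :=
  let V := iota 0 d.+2 in
  PRanState d.+2
    [seq (u, v) | u <- V, v <- [seq w <- V | (u < w)%N]]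
    [seq (rem u V, 0%N) | u <- V].

Definition pran_step (s : pran_state) (i : nat) : pran_state :=
  let cp := nth ([::], 0%N) (pr_list s) i in
  let c := cp.1 in
  let v := pr_nv s in
  PRanState v.+1
    (pr_edges s ++ [seq (u, v) | u <- c])
    (set_nth ([::], 0%N) (pr_list s) i (c, cp.2.+1)
       ++ [seq (v :: rem u c, 0%N) | u <- c]).

Fixpoint pran_exp {R : numFieldType} (t : nat) (f : pran_state -> R)
    (s : pran_state) : R :=
  match t with
  | 0%N => f s
  | t'.+1 =>
      (size (pr_list s))%:R^-1 *
        \sum_(i < size (pr_list s)) pran_exp t' f (pran_step s i)
  end.

Definition Nc (m : nat) (s : pran_state) : nat :=
  count (fun cp : seq nat * nat => cp.2 == m) (pr_list s).

Definition ENc {R : numFieldType} (d m t : nat) : R :=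
  pran_exp t (fun s => (Nc m s)%:R) (pran_init d).

Definition sizeC (d t : nat) : nat := (d + 2 + t * (d + 1))%N.

From HB Require Import structures.
From mathcomp Require Import all_boot all_order all_algebra.
From mathcomp Require Import all_classical all_reals all_analysis.
From mathcomp Require Import zify ring lra.

Set Implicit Arguments.
Unset Strict Implicit.
Unset Printing Implicit Defensive.
Import Order.TTheory GRing.Theory Num.Theory.
Import numFieldNormedType.Exports.
Local Open Scope classical_set_scope.
Local Open Scope ring_scope.

(** Conditioning on the last step,
  E[Nc_(t+1)(m)] = (1 - 1/|C_t|) E[Nc_t(m)] + E[Nc_t(m-1)]/|C_t| + [m = 0](d+1):
  the chosen clique moves from degree m - 1 to degree m, and d+1 fresh cliques of
  degree 0 appear. Since |C_(t+1)| = |C_t| + d + 1 and Pc(m-1) = (d+2) Pc(m), the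
  residuals r_t(m) = E[Nc_t(m)] - Pc(m) |C_t| obey the same recurrence without the
  source term, so r_(t+1)(m) is a convex combination of r_t(m) and r_t(m-1).
  Hence |r_t(m)| never exceeds its initial bound d + 2, and dividing by
  |C_t| > t gives the limit Pc(m). *)

Lemma sum_nth_count (T : Type) (x0 : T) (p : pred T) (s : seq T) :
  (\sum_(i < size s) p (nth x0 s i) = count p s)%N.
Proof. by elim: s => [|x s IHs]; rewrite ?big_ord0 // big_ord_recl IHs. Qed.

Lemma all_set_nth (T : Type) (p : pred T) (x0 x : T) (s : seq T) (n : nat) :
  (n < size s)%N -> all p s -> p x -> all p (set_nth x0 s n x).
Proof.
elim: s n => [|y s IHs] [|n] //= ltns /andP[py ps] px; rewrite ?px ?py ?ps //=.
exact: IHs.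
Qed.

Lemma count_set_nth_add (T : Type) (p : pred T) (x0 x : T) (s : seq T) (n : nat) :
  (n < size s)%N ->
  (count p (set_nth x0 s n x) + p (nth x0 s n) = count p s + p x)%N.
Proof. by elim: s n => [|y s IHs] [|n] //= ltns; [lia | rewrite -addnA IHs //; lia]. Qed.

Lemma sizeC_gt0 (d t : nat) : (0 < sizeC d t)%N.
Proof. by rewrite /sizeC; lia. Qed.

Definition pran_wf (d t : nat) (s : pran_state) : bool :=
  (size (pr_list s) == sizeC d t) && all (fun cp => size cp.1 == d.+1) (pr_list s).

Lemma pran_wf_init (d : nat) : pran_wf d 0 (pran_init d).
Proof.
rewrite /pran_wf /pran_init; move: (iota 0 d.+2) (size_iota 0 d.+2) => V size_V.
rewrite size_map size_V /sizeC mul0n addn0 addn2 eqxx all_map.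
by apply/allP => u uV /=; rewrite size_rem // size_V.
Qed.

Lemma pran_wf_step (d t : nat) (s : pran_state) (i : nat) :
  pran_wf d t s -> (i < size (pr_list s))%N -> pran_wf d t.+1 (pran_step s i).
Proof.
move=> /andP[/eqP size_s all_s] lt_i; rewrite /pran_wf /pran_step /=.
have size_c : size (nth ([::], 0%N) (pr_list s) i).1 = d.+1.
  exact/eqP/(all_nthP _ all_s).
rewrite size_cat size_set_nth size_map size_c (maxn_idPr _) // size_s all_cat.
apply/and3P; split; first by apply/eqP; rewrite /sizeC; lia.
  by apply: all_set_nth => //=; rewrite size_c.
by apply/allP => _ /mapP[u cu ->] /=; rewrite size_rem // size_c.
Qed.

Section Expectation.
Variable R : numFieldType.
Implicit Types (f h : pran_state -> R) (s : pran_state).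

Definition pran_mean f s : R :=
  (size (pr_list s))%:R^-1 * \sum_(i < size (pr_list s)) f (pran_step s i).

Lemma pran_exp_recr (t : nat) f s : pran_exp t.+1 f s = pran_exp t (pran_mean f) s.
Proof.
elim: t s => [|t IHt] s //.
by congr (_ * _); apply: eq_bigr => i _; apply: IHt.
Qed.

Lemma eq_pran_exp_wf (d t0 t : nat) f h s : pran_wf d t0 s ->
  {in pran_wf d (t0 + t), f =1 h} -> pran_exp t f s = pran_exp t h s.
Proof.
elim: t t0 s => [|t IHt] t0 s wf_s eq_fh /=; first by apply: eq_fh; rewrite addn0.
congr (_ * _); apply: eq_bigr => i _; apply: (IHt t0.+1); first exact: pran_wf_step.
by move=> s' wf_s'; apply: eq_fh; rewrite addnS.
Qed.

Lemma pran_expD (t : nat) f h s :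
  pran_exp t (fun s => f s + h s) s = pran_exp t f s + pran_exp t h s.
Proof.
elim: t s => [|t IHt] s //=.
by rewrite -mulrDr -big_split; congr (_ * _); apply: eq_bigr => i _; apply: IHt.
Qed.

Lemma pran_expZ (t : nat) (a : R) f s :
  pran_exp t (fun s => a * f s) s = a * pran_exp t f s.
Proof.
elim: t s => [|t IHt] s //=.
by under eq_bigr => i _ do rewrite IHt; rewrite -mulr_sumr mulrCA.
Qed.

Lemma pran_exp_cst (d t0 t : nat) (c : R) s :
  pran_wf d t0 s -> pran_exp t (fun _ => c) s = c.
Proof.
elim: t t0 s => [|t IHt] t0 s wf_s //=.
under eq_bigr => i _ do rewrite (IHt t0.+1 _ (pran_wf_step wf_s (ltn_ord i))).
rewrite sumr_const card_ord -[c *+ _]mulr_natr mulrCA mulVf ?mulr1 //.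
by case/andP: wf_s => /eqP ->; rewrite pnatr_eq0 -lt0n sizeC_gt0.
Qed.

End Expectation.

Definition Nc_pred (m : nat) (s : pran_state) : nat :=
  if m is m'.+1 then Nc m' s else 0%N.

Lemma Nc_pran_step (m : nat) (s : pran_state) (i : nat) :
  (i < size (pr_list s))%N ->
  let cp := nth ([::], 0%N) (pr_list s) i in
  (Nc m (pran_step s i) + (cp.2 == m) =
   Nc m s + (cp.2.+1 == m) + (m == 0%N) * size cp.1)%N.
Proof.
move=> lt_i /=; rewrite /Nc /pran_step /= count_cat addnAC count_set_nth_add //.
rewrite count_map; congr (_ + _)%N; case: m => [|m].
  by rewrite mul1n -[RHS]count_predT; apply: eq_count.
by rewrite mul0n -[RHS](count_pred0 (nth ([::], 0%N) (pr_list s) i).1); apply: eq_count.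
Qed.

Lemma sum_Nc_pran_step (d t m : nat) (s : pran_state) : pran_wf d t s ->
  (\sum_(i < size (pr_list s)) Nc m (pran_step s i) + Nc m s =
   size (pr_list s) * Nc m s + Nc_pred m s + size (pr_list s) * ((m == 0%N) * d.+1))%N.
Proof.
case/andP=> _ all_s.
have count_pred : Nc_pred m s = count (fun cp : seq nat * nat => cp.2.+1 == m) (pr_list s).
  rewrite /Nc_pred /Nc; case: m => [|m]; last by apply: eq_count.
  by rewrite -[LHS](count_pred0 (pr_list s)); apply: eq_count.
rewrite {2}/Nc -(sum_nth_count ([::], 0%N)) -big_split /=.
rewrite (eq_bigr (fun i : 'I_(size (pr_list s)) => Nc m s +
    ((nth ([::], 0%N) (pr_list s) i).2.+1 == m) + (m == 0%N) * d.+1))%N; last first.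
  by move=> i _; rewrite Nc_pran_step // (eqP (all_nthP _ all_s _ (ltn_ord i))).
by rewrite !big_split /= !sum_nat_const card_ord count_pred -(sum_nth_count ([::], 0%N)).
Qed.

Lemma pran_mean_Nc (R : numFieldType) (d t m : nat) (s : pran_state) :
  pran_wf d t s ->
  pran_mean (fun s => (Nc m s)%:R : R) s =
  (1 - (sizeC d t)%:R^-1) * (Nc m s)%:R + (sizeC d t)%:R^-1 * (Nc_pred m s)%:R
  + ((m == 0%N) * d.+1)%:R.
Proof.
move=> wf_s; rewrite /pran_mean.
have := congr1 (fun n : nat => n%:R : R) (sum_Nc_pran_step m wf_s).
case/andP: wf_s => /eqP -> _; rewrite -natr_sum /=.
move: (sizeC d t) (sizeC_gt0 d t) => n n_gt0; rewrite !natrD !natrM.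
have : n%:R != 0 :> R by rewrite pnatr_eq0 -lt0n.
move: n%:R => N N_neq0 /(canRL (addrK _)) ->.
by field.
Qed.

Lemma ENc_recr (R : numFieldType) (d m t : nat) :
  (ENc d m t.+1 : R) =
  (1 - (sizeC d t)%:R^-1) * ENc d m t
  + (sizeC d t)%:R^-1 * (if m is m'.+1 then ENc d m' t else 0)
  + ((m == 0%N) * d.+1)%:R.
Proof.
rewrite /ENc pran_exp_recr (eq_pran_exp_wf (pran_wf_init d)
  (h := fun s => (1 - (sizeC d t)%:R^-1) * (Nc m s)%:R
         + (sizeC d t)%:R^-1 * (Nc_pred m s)%:R + ((m == 0%N) * d.+1)%:R)); last first.
  by move=> s wf_s; apply: pran_mean_Nc.
rewrite !pran_expD !pran_expZ (pran_exp_cst _ _ (pran_wf_init d)).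
by case: m => [|m] //; rewrite (pran_exp_cst _ _ (pran_wf_init d)).
Qed.

Lemma ENc0 (R : numFieldType) (d m : nat) :
  (ENc d m 0 : R) = if m is 0%N then (d + 2)%:R else 0.
Proof.
rewrite /ENc /= /Nc /pran_init count_map; case: m => [|m].
  by rewrite (eq_count (a2 := predT)) // count_predT size_iota addn2.
by rewrite (eq_count (a2 := pred0)) // count_pred0.
Qed.

Section Residual.
Variables (R : realType) (d : nat).

Definition Pc (m : nat) : R := (d + 1)%:R / (d + 2)%:R ^+ m.+1.

Definition residual (t m : nat) : R := ENc d m t - Pc m * (sizeC d t)%:R.

Lemma natr_d2_neq0 : (d + 2)%:R != 0 :> R.
Proof. by rewrite pnatr_eq0 addn2. Qed.

Lemma Pc_ge0 (m : nat) : 0 <= Pc m.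
Proof. by rewrite divr_ge0 // exprn_ge0. Qed.

Lemma Pc_le1 (m : nat) : Pc m <= 1.
Proof.
rewrite ler_pdivrMr ?exprn_gt0 ?ltr0n ?addn2 // mul1r -natrX ler_nat expnS.
by rewrite addn1 (leq_trans (leqnSn _)) // leq_pmulr // expn_gt0.
Qed.

Lemma natr_sizeCS (t : nat) :
  (sizeC d t.+1)%:R = (sizeC d t)%:R + (d + 1)%:R :> R.
Proof. by rewrite -natrD /sizeC mulSn; congr _%:R; lia. Qed.

Lemma residual_recr (t m : nat) :
  residual t.+1 m =
  (1 - (sizeC d t)%:R^-1) * residual t m
  + (sizeC d t)%:R^-1 * (if m is m'.+1 then residual t m' else 0).
Proof.
have N_neq0 : (sizeC d t)%:R != 0 :> R by rewrite pnatr_eq0 -lt0n sizeC_gt0.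
rewrite /residual ENc_recr natr_sizeCS /Pc.
move: (sizeC d t)%:R N_neq0 => N N_neq0.
case: m => [|m]; rewrite ?mulr0 ?addr0 /=.
  by rewrite mul1n -addn1 expr1; field; rewrite N_neq0 -natrD natr_d2_neq0.
rewrite exprS.
have := expf_neq0 m.+1 natr_d2_neq0; move: (_ ^+ m.+1) => X X_neq0.
by field; rewrite N_neq0 X_neq0 -natrD natr_d2_neq0.
Qed.

Lemma residual_bound (t m : nat) : `|residual t m| <= (d + 2)%:R.
Proof.
elim: t m => [|t IHt] m.
  rewrite /residual ENc0 /sizeC mul0n addn0.
  have := Pc_ge0 m; have := Pc_le1 m; have : 0 <= (d + 2)%:R :> R by [].
  case: m => [|m]; move: (Pc _) ((d + 2)%:R : R) => p D D_ge0 p_le1 p_ge0.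
    by rewrite ger0_norm; nra.
  by rewrite sub0r normrN ger0_norm; nra.
rewrite residual_recr; set q := (sizeC d t)%:R^-1.
have q_ge0 : 0 <= q by rewrite invr_ge0.
have q_le1 : q <= 1 by rewrite invf_le1 ?ltr0n ?ler1n ?sizeC_gt0.
have r_prev_bound : `|if m is m'.+1 then residual t m' else 0| <= (d + 2)%:R.
  by case: m => [|m] //; rewrite normr0.
rewrite (le_trans (ler_normD _ _)) // !normrM.
rewrite [`|1 - q|]ger0_norm ?subr_ge0 // [`|q|]ger0_norm //.
move: (IHt m) r_prev_bound; move: (`|residual t m|) (`|_|) => x y; nra.
Qed.

End Residual.

Lemma cvg_ratio_of_bounded_gap (R : realType) (u v : R^nat) (p C : R) :
  (forall t, t.+1%:R <= v t) -> (forall t, `|u t - p * v t| <= C) ->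
  (fun t => u t / v t) @ \oo --> p.
Proof.
move=> v_ge gap_le; apply/cvgrPdist_le => e e_gt0; near=> t.
have v_gt0 : 0 < v t by apply: lt_le_trans (v_ge t); rewrite ltr0n.
have t_large : C / e <= t%:R by near: t; apply: nbhs_infty_ger.
have -> : p - u t / v t = - ((u t - p * v t) / v t) by field; rewrite gt_eqF.
rewrite normrN normrM [`|(v t)^-1|]gtr0_norm ?invr_gt0 // ler_pdivrMr //.
rewrite ler_pdivrMr // in t_large.
have := gap_le t; have := v_ge t; rewrite -addn1 natrD.
move: (`|_|) => g; nra.
Unshelve. all: end_near.
Qed.

Theorem mainTheorem1 (R : realType) (d : nat) (hd : (1 <= d)%N) (m : nat) :
  (fun t : nat => (ENc d m t : R) / (sizeC d t)%:R) @ \oo -->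
    ((d + 1)%:R / (d + 2)%:R ^+ m.+1 : R).
Proof.
apply: (@cvg_ratio_of_bounded_gap _ _ _ _ (d + 2)%:R).
  by move=> t; rewrite ler_nat /sizeC; lia.
by move=> t; apply: (residual_bound R d t m).
Qed.
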